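(* Let $n\ge 1$ and consider a bin $B=(l_s,u_s]\times(l_t,u_t]\subseteq[0,n]^2$ with $l_s<u_s$, $l_t<u_t$, containing $o_i\ge 1$ observed rank pairs $(s_{i1},t_{i1}),\dots,(s_{io_i},t_{io_i})\in B$. Let $e_i=(u_s-l_s)(u_t-l_t)/n$ be its expected count. For a vertical split at $c\in(l_s,u_s)$, let $o_{i-}(c)=\#\{k: s_{ik}\le c\}$, $o_{i+}(c)=o_i-o_{i-}(c)$, $e_{i-}(c)=(c-l_s)(u_t-l_t)/n$ and $e_{i+}(c)=(u_s-c)(u_t-l_t)/n$. With the chi score $\mathrm{chi}(o,e)=(o-e)^2/e$, define $$\delta_i(c,\mathrm{chi})=\mathrm{chi}\big(o_{i+}(c),e_{i+}(c)\big)+\mathrm{chi}\big(o_{i-}(c),e_{i-}(c)\big)-\mathrm{chi}(o_i,e_i).$$ Then any $c^*\in(l_s,u_s)$ maximizing $\delta_i(c,\mathrm{chi})$ over $c\in(l_s,u_s)$ is one of the point coordinates $s_{i1},\dots,s_{io_i}$. The analogous statement holds for horizontal splits at $c\in(l_t,u_t)$ (with the roles of $s$ and $t$ interchanged), where the maximizer is one of $t_{i1},\dots,t_{io_i}$.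
   Context: Observations $(x_k,y_k)$, $k=1,\dots,n$, are converted to marginal ranks $s_k,t_k\in\{1,\dots,n\}$ (ties broken randomly), so under independence the rank pairs are uniform on the rank space $[0,n]^2$ and the expected number of points in a region of area $a$ is $a/n$. A bin is a rectangle $(l_s,u_s]\times(l_t,u_t]$; splitting it by a vertical line at $c$ produces a lower bin $(l_s,c]\times(l_t,u_t]$ and an upper bin $(c,u_s]\times(l_t,u_t]$ (a point with coordinate equal to $c$ is counted in the lower bin); horizontal splits are defined analogously in the $t$ coordinate. *)

From mathcomp Require Import all_boot all_order all_algebra.
Set Implicit Arguments. Unset Strict Implicit. Unset Printing Implicit Defensive.
Import Order.TTheory GRing.Theory Num.Theory.
Local Open Scope ring_scope.

Definition chi (R : realFieldType) (o e : R) : R := (o - e) ^+ 2 / e.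

Definition count_le (R : realFieldType) (m : nat) (x : 'I_m -> nat) (c : R) : nat :=
  #|[pred k : 'I_m | (x k)%:R <= c]|.

(* delta_i(c, chi) for a split of the coordinate interval (l, u] at c, the other
   side of the bin having length w, with n the sample size and
   x the coordinates (in the split direction) of the m points of the bin. *)
Definition delta_chi (R : realFieldType) (n : nat) (l u w : R)
    (m : nat) (x : 'I_m -> nat) (c : R) : R :=
  let om := (count_le x c)%:R in
  let op := m%:R - om in
  let em := (c - l) * w / n%:R in
  let ep := (u - c) * w / n%:R in
  let e  := (u - l) * w / n%:R in
  chi op ep + chi om em - chi m%:R e.

Definition is_argmax_open (R : realFieldType) (f : R -> R) (l u c : R) : Prop :=
  l < c < u /\ forall c', l < c' < u -> f c' <= f c.

(* Away from the point coordinates the counts o_{i-}(c), o_{i+}(c) are locally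
   constant, while the expected counts are affine in c.  Since
   chi(q, e) = q^2/e - 2q + e is convex in e > 0, strictly so when q <> 0, and
   o_i >= 1 forces one of the two counts to be nonzero, delta_i is strictly
   midpoint-convex around any c that is not a coordinate: one of c - h, c + h
   beats c, so c is not a maximizer. *)

From mathcomp Require Import all_boot all_order all_algebra.
From mathcomp Require Import ring lra.
Set Implicit Arguments. Unset Strict Implicit. Unset Printing Implicit Defensive.
Import Order.TTheory GRing.Theory Num.Theory.
Local Open Scope ring_scope.

Section ChiConvexity.

Context {R : realFieldType}.
Implicit Types q e h : R.

Lemma chi_midpoint_gap q e h : 0 < h < e ->
  chi q (e - h) + chi q (e + h) - 2 * chi q e =
  q ^+ 2 * (2 * h ^+ 2 / (e * (e - h) * (e + h))).
Proof.
move=> /andP[h0 he]; rewrite /chi.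
have e0 : e != 0 by rewrite gt_eqF //; lra.
have e1 : e - h != 0 by rewrite gt_eqF //; lra.
have e2 : e + h != 0 by rewrite gt_eqF //; lra.
by field; rewrite e0 e1 e2.
Qed.

Lemma chi_midpoint_coef_gt0 e h : 0 < h < e ->
  0 < 2 * h ^+ 2 / (e * (e - h) * (e + h)).
Proof.
move=> /andP[h0 he]; apply: divr_gt0; first by rewrite mulr_gt0 // exprn_gt0.
by rewrite !mulr_gt0 //; lra.
Qed.

Lemma chi_midpoint_le q e h : 0 < h < e ->
  2 * chi q e <= chi q (e - h) + chi q (e + h).
Proof.
move=> he; rewrite -subr_ge0 chi_midpoint_gap //.
by rewrite mulr_ge0 ?sqr_ge0 // ltW // chi_midpoint_coef_gt0.
Qed.

Lemma chi_midpoint_lt q e h : 0 < h < e -> q != 0 ->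
  2 * chi q e < chi q (e - h) + chi q (e + h).
Proof.
move=> he q0; rewrite -subr_gt0 chi_midpoint_gap //.
by rewrite mulr_gt0 ?chi_midpoint_coef_gt0 // exprn_even_gt0.
Qed.

End ChiConvexity.

Lemma le_norm_sameside (R : realFieldType) (y c c' : R) :
  `|c' - c| < `|y - c| -> (y <= c') = (y <= c).
Proof.
have [yc | cy] := leP y c.
  rewrite [`|y - c|]ler0_norm ?subr_le0 // ltr_norml => /andP[h1 h2].
  by apply/idP; lra.
rewrite [`|y - c|]gtr0_norm ?subr_gt0 // ltr_norml => /andP[h1 h2].
by apply/negbTE; rewrite -ltNge; lra.
Qed.

Lemma count_le_locally_constant (R : realFieldType) (m : nat)
    (x : 'I_m -> nat) (c : R) :
  (forall k, (x k)%:R != c) ->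
  exists2 d : R, 0 < d &
    forall c', `|c' - c| < d -> count_le x c' = count_le x c.
Proof.
move=> xNc; exists (\big[Num.min/1]_(k < m) `|(x k)%:R - c|).
  apply: (big_ind (fun y => 0 < y)) => //.
    by move=> a b a0 b0; rewrite lt_min a0 b0.
  by move=> k _; rewrite normr_gt0 subr_eq0.
move=> c' hc'; apply: eq_card => k; rewrite !inE; apply: le_norm_sameside.
by apply: lt_le_trans hc' _; rewrite (bigD1 k) //= ge_min lexx.
Qed.

Lemma delta_chi_midpoint_lt (R : realFieldType) (n : nat) (l u w : R)
    (m : nat) (x : 'I_m -> nat) (c h : R) :
  (0 < n)%N -> 0 < w -> (0 < m)%N -> 0 < h -> l < c - h -> c + h < u ->
  count_le x (c - h) = count_le x c -> count_le x (c + h) = count_le x c ->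
  2 * delta_chi n l u w x c <
    delta_chi n l u w x (c - h) + delta_chi n l u w x (c + h).
Proof.
move=> n0 w0 m0 h0 lch chu cntm cntp; rewrite /delta_chi cntm cntp.
set P : R := (count_le x c)%:R; set W := w / n%:R.
have W0 : 0 < W by rewrite divr_gt0 // ltr0n.
have hW : 0 < h * W by rewrite mulr_gt0.
have scaleW y : y * w / n%:R = y * W by rewrite mulrA.
rewrite !scaleW.
have -> : (u - (c - h)) * W = (u - c) * W + h * W by ring.
have -> : (u - (c + h)) * W = (u - c) * W - h * W by ring.
have -> : (c - h - l) * W = (c - l) * W - h * W by ring.
have -> : (c + h - l) * W = (c - l) * W + h * W by ring.
have hu : 0 < h * W < (u - c) * W by rewrite hW ltr_pM2r //; lra.
have hl : 0 < h * W < (c - l) * W by rewrite hW ltr_pM2r //; lra.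
have [P0 | P0] := eqVneq P 0.
  have mP0 : m%:R - P != 0 by rewrite P0 subr0 pnatr_eq0 -lt0n.
  by have := chi_midpoint_lt hu mP0; have := chi_midpoint_le P hl; lra.
by have := chi_midpoint_le (m%:R - P) hu; have := chi_midpoint_lt hl P0; lra.
Qed.

Lemma argmax_delta_chi_is_coord (R : realFieldType) (n : nat) (l u w : R)
    (m : nat) (x : 'I_m -> nat) (c : R) :
  (0 < n)%N -> 0 < w -> (0 < m)%N ->
  is_argmax_open (delta_chi n l u w x) l u c -> exists k, c = (x k)%:R.
Proof.
move=> n0 w0 m0 [/andP[lc cu] cmax].
have [k /eqP <- | xNc] := pickP (fun k => (x k)%:R == c); first by exists k.
have [d d0 cnt] := count_le_locally_constant (fun k => negbT (xNc k)).
set r := Num.min d (Num.min (c - l) (u - c)).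
have r0 : 0 < r by rewrite !lt_min d0 !subr_gt0 lc cu.
have [rd rl ru] : [/\ r <= d, r <= c - l & r <= u - c].
  by rewrite !ge_min !lexx !orbT.
set h := r / 2.
have hm : `|c - h - c| < d by rewrite addrAC subrr sub0r normrN gtr0_norm /h; lra.
have hp : `|c + h - c| < d by rewrite addrAC subrr add0r gtr0_norm /h; lra.
have h0 : 0 < h by rewrite divr_gt0.
have lch : l < c - h by rewrite /h; lra.
have chu : c + h < u by rewrite /h; lra.
have := delta_chi_midpoint_lt n0 w0 m0 h0 lch chu (cnt _ hm) (cnt _ hp).
have := cmax (c - h); have := cmax (c + h); rewrite /h; lra.
Qed.

Theorem proposition1 (R : realFieldType) (n : nat) (ls us lt ut : R)
    (o : nat) (s t : 'I_o -> nat) :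
  (1 <= n)%N ->
  0 <= ls -> ls < us -> us <= n%:R ->
  0 <= lt -> lt < ut -> ut <= n%:R ->
  (1 <= o)%N ->
  (* rank pairs: ranks in {1,...,n}, distinct marginal ranks *)
  (forall k, (1 <= s k <= n)%N /\ (1 <= t k <= n)%N) ->
  injective s -> injective t ->
  (* all points lie in the bin (ls, us] x (lt, ut] *)
  (forall k, ls < (s k)%:R <= us /\ lt < (t k)%:R <= ut) ->
  (forall cstar : R,
     is_argmax_open (delta_chi n ls us (ut - lt) s) ls us cstar ->
     exists k, cstar = (s k)%:R) /\
  (forall cstar : R,
     is_argmax_open (delta_chi n lt ut (us - ls) t) lt ut cstar ->
     exists k, cstar = (t k)%:R).
Proof.
move=> n0 _ lus _ _ ltu _ o0 _ _ _ _.
by split=> c; apply: argmax_delta_chi_is_coord; rewrite // subr_gt0.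
Qed.
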